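(* Let $p>3$ be a prime. Then $$\left(\tfrac{p-1}{2}\right)!!\prod_{\substack{i,j=1\\ p\nmid 2i+j}}^{(p-1)/2}(2i+j)\ \equiv\ \left(\frac{-2}{p}\right)\left(\tfrac{p-3}{2}\right)!!\prod_{\substack{i,j=1\\ p\nmid 2i-j}}^{(p-1)/2}(2i-j)\ \equiv\ \pm1\pmod p.$$
   Context: For a positive integer $n$, $n!!=\prod_{k=0}^{\lfloor(n-1)/2\rfloor}(n-2k)$, and $0!!=1$. $\left(\frac{\cdot}{p}\right)$ denotes the Legendre symbol. *)

From HB Require Import structures.
From mathcomp Require Import all_boot all_order all_algebra.
Set Implicit Arguments. Unset Strict Implicit. Unset Printing Implicit Defensive.
Import Order.TTheory GRing.Theory Num.Theory.

Fixpoint dfact (n : nat) : nat :=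
  match n with
  | 0 => 1
  | 1 => 1
  | (m.+2) as k => k * dfact m
  end.

Definition legendre (a : int) (p : nat) : int :=
  (
  if (p%:Z %| a)%Z then 0
  else if [exists x : 'I_p, ((x%:Z) ^+ 2 == a %[mod p%:Z])%Z] then 1 else -1)%R.

From HB Require Import structures.
From mathcomp Require Import all_boot all_order all_algebra all_field.
From mathcomp Require Import zify ring.
Import Order.TTheory GRing.Theory Num.Theory.
Local Open Scope ring_scope.

(* Write p = 2h + 1 and compute in the field F_p.  Let T(n) be the product of
   1, ..., n in F_p with the multiples of p omitted (the "p-free factorial"
   [pfact]).  Then each row of the two double products is a quotient of values
   of T: row i of the first runs over 2i + 1, ..., 2i + h, giving
   T(2i + h) / T(2i); row i of the second runs over 2i - h, ..., 2i - 1, which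
   are congruent to 2i + h + 1, ..., 2i + 2h, giving T(2i + 2h) / T(2i + h).
   Wilson's theorem yields T(p + n) = -T(n).  Hence
   - the two sides A and B multiply to 1: the rows telescope to
     T(2i + 2h) / T(2i) = -1 / 2i, and Euler's criterion (-2/p) = (-2)^h turns
     the remaining factors into (-2)^h h!! (h-1)!! = (-2)^h h! = (-1)^h (2h)!!;
   - A^2 = 1: shifting the index i by m = floor(h/2) compares the T(2i + h)
     with the T(2i), giving A = (-1)^m for even h and A = (-1)^m (2h-1)!! for
     odd h, where ((2h-1)!!)^2 = (-1)^(h+1) by Wilson's theorem again. *)

Lemma dfactSS n : dfact n.+2 = (n.+2 * dfact n)%N.
Proof. by []. Qed.

Lemma dfact_fact n : (dfact n.+1 * dfact n = n.+1`!)%N.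
Proof. by elim: n => [|n IH] //; rewrite dfactSS factS -IH; ring. Qed.

Lemma dfact_add n m :
  dfact (n + 2 * m) = (dfact n * \prod_(1 <= i < m.+1) (n + 2 * i))%N.
Proof.
elim: m => [|m IH]; first by rewrite muln0 addn0 big_geq // muln1.
rewrite big_nat_recr //= mulnA -IH.
by rewrite (_ : n + 2 * m.+1 = (n + 2 * m).+2)%N ?dfactSS 1?mulnC //; lia.
Qed.

Lemma dfact_even m : dfact (2 * m) = (2 ^ m * m`!)%N.
Proof.
elim: m => [|m IH] //.
by rewrite (_ : 2 * m.+1 = (2 * m).+2)%N ?dfactSS ?IH ?factS ?expnS; [ring | lia].
Qed.

Lemma dfact_odd m : dfact (2 * m).-1 = (\prod_(1 <= i < m.+1) (2 * i).-1)%N.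
Proof.
elim: m => [|m IH]; first by rewrite big_geq.
rewrite big_nat_recr // -IH; case: m {IH} => [|m] //.
by rewrite (_ : (2 * m.+2).-1 = ((2 * m.+1).-1).+2)%N ?dfactSS 1?mulnC //; lia.
Qed.

Lemma prod_split_shift (R : comNzRingType) (f : nat -> R) n m :
  \prod_(1 <= i < (n + m).+1) f i =
  \prod_(1 <= i < m.+1) f i * \prod_(1 <= i < n.+1) f (i + m).
Proof.
rewrite (@big_cat_nat _ _ _ m.+1) //=; last by lia.
congr (_ * _); rewrite -{1}(add1n m) big_addn.
by rewrite (_ : (n + m).+1 - m = n.+1)%N //; lia.
Qed.

Lemma prod_shift_exchange (R : comNzRingType) (f : nat -> R) n m :
  \prod_(1 <= i < n.+1) f (i + m) * \prod_(1 <= i < m.+1) f i =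
  \prod_(1 <= i < n.+1) f i * \prod_(1 <= i < m.+1) f (i + n).
Proof. by rewrite mulrC -prod_split_shift addnC prod_split_shift. Qed.

Lemma sq1_inverse (R : idomainType) (x y : R) :
  x * y = 1 -> x ^+ 2 = 1 -> y = x /\ (y = 1 \/ y = -1).
Proof.
move=> xy1 x2; have yx : y = x by rewrite -[y]mul1r -x2 expr2 -mulrA xy1 mulr1.
split=> //; have /eqP := x2; rewrite -yx sqrf_eq1.
by case/orP => /eqP ->; [left | right].
Qed.

Section PrimeField.

Variable p : nat.
Hypothesis p_prime : prime p.
Local Notation F := 'F_p.

Lemma Fp_nat_eq0 n : ((n%:R : F) == 0) = (p %| n)%N.
Proof. by rewrite -(inj_eq val_inj) /= val_Fp_nat. Qed.

Lemma Fp_int_eq0 z : ((z%:~R : F) == 0) = (p%:Z %| z)%Z.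
Proof.
case: z => n; first by rewrite dvdzE /= -Fp_nat_eq0.
by rewrite NegzE mulrNz oppr_eq0 dvdzE /= -Fp_nat_eq0.
Qed.

Lemma eqmodz_Fp a b : (a = b %[mod p%:Z])%Z <-> (a%:~R : F) = b%:~R.
Proof.
split => [E | E]; apply/eqP.
  by rewrite -subr_eq0 -rmorphB /= Fp_int_eq0 -eqz_mod_dvd; apply/eqP.
by rewrite eqz_mod_dvd -Fp_int_eq0 rmorphB /= E subrr.
Qed.

Lemma Fp_nat_neq0 k : (0 < k < p)%N -> (k%:R : F) != 0.
Proof. by case/andP => k0 kp; rewrite Fp_nat_eq0 gtnNdvd. Qed.

Lemma Fp_nat_inj k l : (k < p)%N -> (l < p)%N -> (k%:R : F) = l%:R -> k = l.
Proof.
by move=> kp lp E; have := val_Fp_nat p_prime k; rewrite E val_Fp_nat // !modn_small.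
Qed.

(* [nz1 x] is x with 0 replaced by 1: it is the factor contributed to a
   product in which the multiples of p are skipped. *)
Definition nz1 (x : F) : F := if x == 0 then 1 else x.

Lemma nz1_neq0 x : nz1 x != 0.
Proof. by rewrite /nz1; case: (x =P 0) => [_|/eqP]; rewrite ?oner_neq0. Qed.

Lemma nz1_nat k : (0 < k < p)%N -> nz1 k%:R = k%:R.
Proof. by move/Fp_nat_neq0; rewrite /nz1 => /negPf ->. Qed.

Lemma rmorph_prod_skip (r : seq nat) (f : nat -> int) :
  ((\prod_(j <- r | ~~ (p%:Z %| f j)%Z) f j)%:~R : F) = \prod_(j <- r) nz1 (f j)%:~R.
Proof.
rewrite rmorph_prod big_mkcond /=; apply: eq_bigr => j _.
by rewrite /nz1 Fp_int_eq0; case: (p%:Z %| f j)%Z.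
Qed.

Definition pfact n : F := \prod_(1 <= k < n.+1) nz1 k%:R.

Lemma pfact_neq0 n : pfact n != 0.
Proof. by rewrite prodf_seq_neq0; apply/allP => k _; exact: nz1_neq0. Qed.

Lemma pfactS n : pfact n.+1 = pfact n * nz1 n.+1%:R.
Proof. by rewrite /pfact big_nat_recr. Qed.

Lemma prod_range_pfact a b :
  \prod_(1 <= j < b.+1) nz1 (a + j)%:R = pfact (a + b) / pfact a.
Proof.
apply: (mulIf (pfact_neq0 a)); rewrite divfK ?pfact_neq0 // mulrC.
elim: b => [|b IH]; first by rewrite big_geq // mulr1 addn0.
by rewrite big_nat_recr //= mulrA IH addnS pfactS.
Qed.

Lemma pfact_fact n : (n < p)%N -> pfact n = n`!%:R.
Proof.
elim: n => [|n IH] Hn; first by rewrite /pfact big_geq.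
by rewrite pfactS IH ?(ltnW Hn) // nz1_nat ?Hn // factS natrM mulrC.
Qed.

Lemma pfact_pred_p : pfact p.-1 = -1.
Proof.
have p1 := prime_gt1 p_prime.
rewrite pfact_fact ?prednK ?ltn_pred ?prime_gt0 //.
have W : (((p.-1)`!).+1%:R : F) = 0 by apply/eqP; rewrite Fp_nat_eq0 -Wilson.
by apply/eqP; rewrite -addr_eq0 -mulrSr W.
Qed.

(* Passing a multiple of p multiplies the p-free factorial by T(p) = -1. *)
Lemma pfact_addp n : pfact (p + n) = - pfact n.
Proof.
have Ep : pfact p = -1.
  have := pfactS p.-1; rewrite prednK ?prime_gt0 // => ->.
  by rewrite pfact_pred_p pchar_Fp_0 // /nz1 eqxx mulr1.
rewrite -[pfact (p + n)](@divfK _ (pfact p)) ?pfact_neq0 // -prod_range_pfact Ep.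
rewrite mulrN1; congr (- _); apply: eq_bigr => j _.
by rewrite natrD pchar_Fp_0 // add0r.
Qed.

Section HalfPrime.

Variable h : nat.
Hypothesis p_eq : (2 * h).+1 = p.

Lemma half_gt0 : (0 < h)%N.
Proof. by have := prime_gt1 p_prime; rewrite -p_eq; case: h. Qed.

Lemma fermat (x : F) : x != 0 -> x ^+ (2 * h) = 1.
Proof.
move=> x0; have := expf_card x; rewrite card_Fp // => xp.
by apply: (mulfI x0); rewrite -exprS p_eq xp mulr1.
Qed.

(* Every root of X^h - 1 is a square: the squares of 1, ..., h are h
   distinct roots, so a further root would exceed the degree bound. *)
Lemma half_root_square (y : F) : y ^+ h = 1 -> exists2 k, (k < p)%N & y = k%:R ^+ 2.
Proof.
move=> yh.
have [/existsP[k /eqP ->]|not_sq] := boolP [exists k : 'I_p, y == (k : nat)%:R ^+ 2].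
  by exists k.
have kr k : k \in iota 1 h -> (0 < k < p)%N by rewrite mem_iota; lia.
pose rs := y :: [seq (k%:R : F) ^+ 2 | k <- iota 1 h].
have P0 : 'X^h - 1 != 0 :> {poly F} by rewrite -size_poly_eq0 size_XnsubC // half_gt0.
have roots : all (root ('X^h - 1)) rs.
  rewrite /= /root !hornerE yh subrr eqxx /=.
  apply/allP => _ /mapP[k kin ->]; rewrite /root !hornerE -exprM fermat ?subrr //.
  exact/Fp_nat_neq0/kr.
have distinct : uniq rs.
  rewrite /= map_inj_in_uniq ?iota_uniq ?andbT.
    apply/negP => /mapP[k kin E]; move/negP: not_sq; apply; apply/existsP.
    have kp : (k < p)%N by have := kr _ kin; lia.
    by exists (Ordinal kp); rewrite E.
  move=> k l kin lin /eqP; rewrite -subr_eq0 subr_sqr mulf_eq0 subr_eq0 -natrD.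
  have [kp lp] := (kr _ kin, kr _ lin); rewrite !mem_iota in kin lin.
  case/orP => [/eqP /Fp_nat_inj -> //|]; try lia.
  by have /negPf -> : ((k + l)%:R : F) != 0 by apply: Fp_nat_neq0; lia.
have := max_poly_roots P0 roots distinct.
by rewrite /= size_map size_iota size_XnsubC ?half_gt0 // ltnn.
Qed.

Lemma euler_criterion (a : int) :
  (a%:~R : F) != 0 -> ((legendre a p)%:~R : F) = a%:~R ^+ h.
Proof.
move=> a0; rewrite /legendre -Fp_int_eq0 (negPf a0).
case: existsP => [[x /eqP /eqmodz_Fp]|not_sq].
  rewrite rmorphXn /= => Ex; rewrite -Ex -exprM fermat //.
  by apply: contraNneq a0 => x0; rewrite -Ex x0 expr0n.
have : ((a%:~R : F) ^+ h) ^+ 2 == 1 by rewrite -exprM mulnC fermat.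
rewrite sqrf_eq1 => /orP[/eqP /half_root_square [k kp Ek]|/eqP -> //].
by case: not_sq; exists (Ordinal kp); apply/eqP/eqmodz_Fp; rewrite rmorphXn /= -Ek.
Qed.

Lemma row_plus i :
  \prod_(1 <= j < h.+1) nz1 ((2 * i%:Z + j%:Z)%:~R) = pfact (2 * i + h) / pfact (2 * i).
Proof.
by rewrite -prod_range_pfact; apply: eq_bigr => j _; rewrite rmorphD rmorphM /= natrD natrM.
Qed.

(* Row i of the double product over 2i - j runs over 2i - h, ..., 2i - 1,
   which are congruent to 2i + h + 1, ..., 2i + 2h. *)
Lemma row_minus i :
  \prod_(1 <= j < h.+1) nz1 ((2 * i%:Z - j%:Z)%:~R) =
  pfact (2 * i + h + h) / pfact (2 * i + h).
Proof.
rewrite -prod_range_pfact big_nat_rev /=; apply: eq_big_nat => j /andP[j1 jh].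
rewrite (_ : 2 * i + h + j = 2 * i + p - (1 + h.+1 - j.+1))%N; last by lia.
rewrite natrB; last by lia.
by rewrite natrD pchar_Fp_0 // addr0 rmorphB rmorphM /= natrM.
Qed.

(* The images of the two double products without their double-factorial
   prefactors, as products of rows. *)
Definition rows_plus : F := \prod_(1 <= i < h.+1) (pfact (2 * i + h) / pfact (2 * i)).

Definition rows_minus : F :=
  \prod_(1 <= i < h.+1) (pfact (2 * i + h + h) / pfact (2 * i + h)).

Lemma natr_dfact_even m : \prod_(1 <= i < m.+1) ((2 * i)%:R : F) = (dfact (2 * m))%:R.
Proof. by rewrite -natr_prod -[(2 * m)%N]add0n dfact_add mul1n. Qed.

Lemma natr_dfact_even_neq0 m : (m <= h)%N -> ((dfact (2 * m))%:R : F) != 0.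
Proof.
move=> mh; rewrite -natr_dfact_even prodf_seq_neq0.
by apply/allP => i; rewrite mem_index_iota => Hi /=; apply: Fp_nat_neq0; lia.
Qed.

Lemma pfact_even i : (0 < i <= h)%N -> pfact (2 * i) = pfact (2 * i).-1 * (2 * i)%:R.
Proof.
by move=> Hi; have := pfactS (2 * i).-1; rewrite prednK ?nz1_nat //; lia.
Qed.

Lemma pfact_wrap i : (0 < i)%N -> pfact (2 * i + h + h) = - pfact (2 * i).-1.
Proof. by move=> Hi; rewrite -pfact_addp; congr pfact; lia. Qed.

(* The two families of rows combined telescope row by row:
   T(2i + 2h) / T(2i) = -1 / 2i. *)
Lemma rows_plus_minus : rows_plus * rows_minus = (-1) ^+ h / (dfact (2 * h))%:R.
Proof.
have -> : (-1) ^+ h = \prod_(1 <= i < h.+1) (-1 : F) by rewrite prodr_const_nat subn1.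
rewrite -natr_dfact_even -prodfV -!big_split.
apply: eq_big_nat => i Hi; rewrite /= pfact_wrap ?pfact_even //; try lia.
have two_i0 : ((2 * i)%:R : F) != 0 by apply: Fp_nat_neq0; lia.
move: (pfact_neq0 (2 * i + h)) (pfact_neq0 (2 * i).-1) two_i0.
set a := pfact _; set b := pfact _; set c := _%:R => a0 b0 c0.
rewrite invfM; transitivity ((a / a) * (b / b) * (-1 * c^-1)); first by ring.
by rewrite !divff // !mul1r.
Qed.

(* The shift i -> i + m of the products of T(2i) costs a factor (-1)^m / (2m)!!,
   since the m factors T(2i + 2h) wrap around to -T(2i - 1). *)
Lemma shifted_evens m : (m <= h)%N ->
  \prod_(1 <= i < h.+1) pfact (2 * (i + m)) =
  (-1) ^+ m * \prod_(1 <= i < h.+1) pfact (2 * i) / (dfact (2 * m))%:R.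
Proof.
move=> mh; have := @prod_shift_exchange _ (fun i => pfact (2 * i)) h m; rewrite /=.
set Q := \prod_(1 <= i < m.+1) pfact (2 * i).-1.
have Q0 : Q != 0 by rewrite prodf_seq_neq0; apply/allP => i _; exact: pfact_neq0.
have -> : \prod_(1 <= i < m.+1) pfact (2 * i) = Q * (dfact (2 * m))%:R.
  rewrite -natr_dfact_even -big_split; apply: eq_big_nat => i Hi; rewrite pfact_even //; lia.
have -> : \prod_(1 <= i < m.+1) pfact (2 * (i + h)) = (-1) ^+ m * Q.
  have -> : (-1) ^+ m = \prod_(1 <= i < m.+1) (-1 : F) by rewrite prodr_const_nat subn1.
  rewrite -big_split; apply: eq_big_nat => i Hi; rewrite /= mulN1r -pfact_wrap; last by lia.
  by congr pfact; lia.
move=> E; have D0 := natr_dfact_even_neq0 m mh.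
by apply: (mulIf Q0); apply: (mulIf D0); rewrite -mulrA E [in RHS]mulrAC divfK //; ring.
Qed.

(* Reflection k -> p - k maps the odd numbers below p to the even ones. *)
Lemma dfact_reflect : ((dfact (2 * h))%:R : F) = (-1) ^+ h * (dfact (2 * h).-1)%:R.
Proof.
rewrite -natr_dfact_even dfact_odd natr_prod big_nat_rev /=.
have -> : (-1) ^+ h = \prod_(1 <= i < h.+1) (-1 : F) by rewrite prodr_const_nat subn1.
rewrite -big_split; apply: eq_big_nat => i Hi /=.
rewrite (_ : 2 * (1 + h.+1 - i.+1) = p - (2 * i).-1)%N; last by lia.
by rewrite natrB ?pchar_Fp_0 ?sub0r ?mulN1r //; lia.
Qed.

(* With Wilson's theorem (2h)!! (2h-1)!! = (2h)! = -1 this gives the square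
   of the odd double factorial. *)
Lemma dfact_odd_sq : ((dfact (2 * h).-1)%:R : F) ^+ 2 = (-1) ^+ h.+1.
Proof.
have W : ((dfact (2 * h))%:R : F) * (dfact (2 * h).-1)%:R = -1.
  rewrite -natrM; have := dfact_fact (2 * h).-1; rewrite prednK; last by have := half_gt0; lia.
  move=> ->; rewrite (_ : 2 * h = p.-1)%N; last by lia.
  by rewrite -pfact_fact ?pfact_pred_p //; lia.
rewrite dfact_reflect in W; set D := (dfact _)%:R in W *.
transitivity ((-1) ^+ h * ((-1) ^+ h * D * D)); last by rewrite W exprSr.
by rewrite !mulrA -expr2 sqrr_sign mul1r expr2.
Qed.

(* For odd h = 2m + 1 the extra factors 2i + h of T(2i + h) = T(2(i + m)) (2i + h)
   are h + 2, ..., h + 2m below p and 2, ..., 2m above it. *)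
Lemma odd_shift_factors m : h = (2 * m).+1 ->
  \prod_(1 <= i < h.+1) nz1 (2 * i + h)%:R =
  (\prod_(1 <= i < m.+1) (h + 2 * i))%:R * (dfact (2 * m))%:R.
Proof.
move=> hm; have := @prod_split_shift _ (fun i => nz1 (2 * i + h)%:R) m m.+1.
rewrite (_ : m + m.+1 = h)%N; last by lia.
move=> ->; rewrite /= big_nat_recr //= -natr_dfact_even natr_prod.
rewrite (_ : 2 * m.+1 + h = p)%N; last by lia.
rewrite pchar_Fp_0 // [nz1 0]/nz1 eqxx mulr1; congr (_ * _); apply: eq_big_nat => i Hi.
  by rewrite addnC nz1_nat //; lia.
rewrite (_ : 2 * (i + m.+1) + h = p + 2 * i)%N; last by lia.
by rewrite natrD pchar_Fp_0 // add0r nz1_nat //; lia.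
Qed.

Lemma scaled_rows_plus_even m : h = (2 * m)%N -> (dfact h)%:R * rows_plus = (-1) ^+ m.
Proof.
move=> hm; rewrite /rows_plus prodf_div.
rewrite (eq_bigr (fun i => pfact (2 * (i + m)))) => [|i _]; last by congr pfact; lia.
rewrite shifted_evens; last by lia.
have Y0 : \prod_(1 <= i < h.+1) pfact (2 * i) != 0.
  by rewrite prodf_seq_neq0; apply/allP => i _; exact: pfact_neq0.
have D0 : ((dfact (2 * m))%:R : F) != 0 by apply: natr_dfact_even_neq0; lia.
by rewrite {1}hm; field; rewrite Y0 D0.
Qed.

Lemma scaled_rows_plus_odd m :
  h = (2 * m).+1 -> (dfact h)%:R * rows_plus = (-1) ^+ m * (dfact (2 * h).-1)%:R.
Proof.
move=> hm; rewrite /rows_plus prodf_div.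
rewrite (eq_bigr (fun i => pfact (2 * (i + m)) * nz1 (2 * i + h)%:R)) => [|i _]; last first.
  by rewrite (_ : 2 * i + h = (2 * (i + m)).+1)%N ?pfactS //; lia.
rewrite big_split /= (odd_shift_factors m hm) shifted_evens; last by lia.
rewrite (_ : (2 * h).-1 = h + 2 * m)%N ?dfact_add ?natrM; last by lia.
have Y0 : \prod_(1 <= i < h.+1) pfact (2 * i) != 0.
  by rewrite prodf_seq_neq0; apply/allP => i _; exact: pfact_neq0.
have D0 : ((dfact (2 * m))%:R : F) != 0 by apply: natr_dfact_even_neq0; lia.
by field; rewrite Y0 D0.
Qed.

Lemma scaled_rows_plus_sq : ((dfact h)%:R * rows_plus) ^+ 2 = 1.
Proof.
have := odd_double_half h; rewrite -addn1 -muln2.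
case: (odd h) => /= hm.
  rewrite (scaled_rows_plus_odd h./2) ?exprMn ?sqrr_sign ?mul1r ?dfact_odd_sq; last by lia.
  by rewrite (_ : h.+1 = 2 * h./2.+1)%N; [rewrite -signr_odd oddM | lia].
by rewrite (scaled_rows_plus_even h./2) ?sqrr_sign //; lia.
Qed.

Lemma rmorph_A :
  (((dfact h)%:Z * \prod_(1 <= i < h.+1)
      \prod_(1 <= j < h.+1 | ~~ (p%:Z %| (2 * i%:Z + j%:Z))%Z) (2 * i%:Z + j%:Z) : int)%:~R : F)
  = (dfact h)%:R * rows_plus.
Proof.
rewrite rmorphM rmorph_prod /=; congr (_ * _); apply: eq_bigr => i _.
by rewrite (rmorph_prod_skip _ (fun j => 2 * i%:Z + j%:Z)) row_plus.
Qed.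

Lemma rmorph_B :
  ((legendre (-2) p * (dfact (p - 3)./2)%:Z * \prod_(1 <= i < h.+1)
      \prod_(1 <= j < h.+1 | ~~ (p%:Z %| (2 * i%:Z - j%:Z))%Z) (2 * i%:Z - j%:Z) : int)%:~R : F)
  = (-2) ^+ h * (dfact h.-1)%:R * rows_minus.
Proof.
have m2 : ((-2 : int)%:~R : F) = -2 by rewrite rmorphN /= rmorph_nat.
rewrite !rmorphM rmorph_prod /= euler_criterion m2; last first.
  by rewrite oppr_eq0 Fp_nat_neq0 //; have := half_gt0; lia.
rewrite (_ : (p - 3)./2 = h.-1)%N; last by rewrite -p_eq -(half_bit_double h.-1 false); lia.
congr (_ * _); apply: eq_bigr => i _.
by rewrite (rmorph_prod_skip _ (fun j => 2 * i%:Z - j%:Z)) row_minus.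
Qed.

(* The product of the two sides is 1:
   (-2)^h h!! (h-1)!! (-1)^h / (2h)!! = (-1)^h 2^h h! (-1)^h / (2^h h!). *)
Lemma scaled_rows_inverse :
  ((dfact h)%:R * rows_plus) * ((-2) ^+ h * (dfact h.-1)%:R * rows_minus) = 1.
Proof.
have h0 := half_gt0.
have DD : (dfact h * dfact h.-1 = h`!)%N by have := dfact_fact h.-1; rewrite prednK.
have D0 : ((2 ^ h * h`!)%:R : F) != 0 by rewrite -dfact_even natr_dfact_even_neq0.
transitivity ((-2) ^+ h * (dfact h * dfact h.-1)%:R * (rows_plus * rows_minus)).
  by rewrite natrM; ring.
rewrite rows_plus_minus DD dfact_even (_ : -2 = -1 * 2 :> F) ?exprMn; last by rewrite mulN1r.
set s := (-1 : F) ^+ h; have s2 : s * s = 1 by rewrite -expr2 sqrr_sign.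
transitivity ((s * s) * ((2 ^ h * h`!)%:R / (2 ^ h * h`!)%:R)); last by rewrite s2 divff ?mul1r.
by rewrite natrM natrX; ring.
Qed.

End HalfPrime.
End PrimeField.

Lemma odd_prime_half p : prime p -> (2 < p)%N -> (2 * p.-1./2).+1 = p.
Proof.
move=> p_prime p_gt2; have p_odd : odd p.
  by case: (even_prime p_prime) => // p2; rewrite p2 in p_gt2.
have := odd_double_half p.-1; rewrite -subn1 oddB ?p_odd ?prime_gt0 //=.
by have := prime_gt0 p_prime; lia.
Qed.

Theorem lemma6p1 (p : nat) (hp : prime p) (hp3 : (3 < p)%N) :
  let h := p.-1./2 in
  let A : int := (dfact h)%:Z *
      \prod_(1 <= i < h.+1) \prod_(1 <= j < h.+1 | ~~ (p%:Z %| (2 * i%:Z + j%:Z))%Z)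
          (2 * i%:Z + j%:Z) in
  let B : int := legendre (-2) p * (dfact (p - 3)./2)%:Z *
      \prod_(1 <= i < h.+1) \prod_(1 <= j < h.+1 | ~~ (p%:Z %| (2 * i%:Z - j%:Z))%Z)
          (2 * i%:Z - j%:Z) in
  (A = B %[mod p%:Z])%Z /\
  ((B = 1 %[mod p%:Z])%Z \/ (B = -1 %[mod p%:Z])%Z).
Proof.
move=> h A B.
have p_eq : (2 * h).+1 = p by apply: odd_prime_half => //; apply: ltnW.
have EA : (A%:~R : 'F_p) = (dfact h)%:R * rows_plus p h := rmorph_A p hp h.
have EB : (B%:~R : 'F_p) = (-2) ^+ h * (dfact h.-1)%:R * rows_minus p h :=
  rmorph_B p hp h p_eq.
have [BA Bsign] :=
  @sq1_inverse _ _ _ (scaled_rows_inverse p hp h p_eq) (scaled_rows_plus_sq p hp h p_eq).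
rewrite -EA -EB in BA Bsign; split; first exact/(eqmodz_Fp p hp).
by case: Bsign => E; [left | right]; apply/(eqmodz_Fp p hp); rewrite E ?rmorph1 ?rmorphN1.
Qed.
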